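(* Let $Q\in\mathbb N$ and $k\in\mathbb N_0\cap[0,2Q-1]$. Then $\|1\|_{k,Q}=\frac{T^k}{k!}$, where $1$ denotes the constant function $[0,T]\times\mathbb R^d\ni(t,x)\mapsto1$.
   Context: $T\in(0,\infty)$, $d\in\mathbb N$, $(\Omega,\mathcal F,\mathbb P)$ a probability space and $W^0\colon[0,T]\times\Omega\to\mathbb R^d$ a standard Brownian motion. Gauss–Legendre weights: for $n\in\mathbb N$ let $c^n_1,\dots,c^n_n$ be the roots of $x\mapsto\frac{1}{2^nn!}\frac{d^n}{dx^n}[(x^2-1)^n]$; for $a\le b$ let $q^{n,[a,b]}(t)=\int_a^b\prod_{i:\,c^n_i\neq\frac{2t-(a+b)}{b-a}}\frac{2x-(b-a)c^n_i-(a+b)}{2t-(b-a)c^n_i-(a+b)}\,dx$ if $a<b$ and $\frac{2t-(a+b)}{b-a}\in\{c^n_1,\dots,c^n_n\}$, else $0$; sums $\sum_{t\in[a,b]}$ range over the finitely many points with nonzero weight. For $Q\in\mathbb N$: $\bar q^{0,Q}=\mathbb 1_{\{0\}}$, $\bar q^{n,Q}(t)=\sum_{s\in[0,t]}\bar q^{n-1,Q}(s)q^{Q,[s,T]}(t)$. Semi-norm: $\|V\|_{k,Q}=\sum_{t\in[0,T]}\bar q^{k,Q}(t)\sup_{s\in[t,T]}\sup_{u\in[0,s]}\sup_{z\in\mathbb R^d}(\mathbb E[|V(s,z+W^0_u)|^2])^{1/2}$. *)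

From HB Require Import structures.
From mathcomp Require Import all_boot all_order all_algebra.
From mathcomp Require Import all_classical all_reals all_analysis.
Set Implicit Arguments. Unset Strict Implicit. Unset Printing Implicit Defensive.
Import Order.TTheory GRing.Theory Num.Theory.
Import numFieldNormedType.Exports.
Local Open Scope classical_set_scope.
Local Open Scope ring_scope.

Section GL.
Variable R : realType.

Definition legendre (n : nat) : {poly R} :=
  ((2 ^ n * n`!)%:R)^-1 *: ((('X ^+ 2 - 1) ^+ n)^`(n)).

Definition lroots (n : nat) : set R := [set c | root (legendre n) c].

Definition resc (a b t : R) : R := (2 * t - (a + b)) / (b - a).

Definition gl_weight (n : nat) (a b t : R) : R :=
  if pselect ((a < b) /\ lroots n (resc a b t)) is left _ then
    Rintegral lebesgue_measure `[a, b]
      (fun x => \big[*%R/1%R]_(c \in [set c | lroots n c /\ c <> resc a b t])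
                  ((2 * x - (b - a) * c - (a + b)) /
                   (2 * t - (b - a) * c - (a + b))))
  else 0.

(* iterated weights \bar q^{n,Q}; sums range over the (finitely many)
   points with nonzero summand (finitely supported sums of fsbigop) *)
Fixpoint qbar (T : R) (Q : nat) (n : nat) (t : R) : R :=
  match n with
  | 0 => if t == 0 then 1 else 0
  | m.+1 => \sum_(s \in `[0, t]) (qbar T Q m s * gl_weight Q s T t)
  end.

(* extended-real square root (E[...] is nonnegative here) *)
Definition esqrt (x : \bar R) : \bar R :=
  match x with
  | r%:E => (Num.sqrt r)%:E
  | +oo%E => +oo%E
  | -oo%E => 0%E
  end.

Definition seminorm (T : R) (d : nat) (dO : measure_display)
  (Omega : measurableType dO) (P : probability Omega R)
  (W : R -> Omega -> 'rV[R]_d) (V : R -> 'rV[R]_d -> R) (k Q : nat) : \bar R :=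
  (\sum_(t \in [set` `[0, T]%R]) ((qbar T Q k t)%:E *
     ereal_sup [set ereal_sup [set ereal_sup
        (range (fun z : 'rV[R]_d =>
           esqrt (\int[P]_w ((V s (z + W u w)) ^+ 2)%:E)))
        | u in [set` `[0, s]%R]] | s in [set` `[t, T]%R]]))%E.

End GL.

From mathcomp Require Import all_boot all_order all_algebra.
From mathcomp Require Import all_classical all_reals all_analysis.
From mathcomp Require Import polyorder polyrcf cauchyreals.
From mathcomp Require Import ring lra zify.
Set Implicit Arguments. Unset Strict Implicit. Unset Printing Implicit Defensive.
Import Order.TTheory GRing.Theory Num.Theory.
Import numFieldNormedType.Exports.
Local Open Scope classical_set_scope.
Local Open Scope ring_scope.

(* Up to a constant and the affine change of variables [resc s T], the
   Legendre polynomial of degree Q is G = (((x - s)(x - T))^Q)^(Q).  Rolle's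
   theorem gives Q distinct roots of G in ]s, T[, so these are all its roots,
   and Q-fold integration by parts shows that G is orthogonal on [s, T] to
   every polynomial of degree < Q.  Dividing by G and interpolating the
   remainder at the roots then shows that the weights q^{Q,[s,T]} integrate
   exactly every polynomial of degree < 2Q.
   Each \bar q^{m,Q} is supported by a finite set of nodes in [0, T], so its
   recursive definition unfolds into finite sums; exactness on
   (T - t)^j / j!, whose integral over [s, T] is (T - s)^(j+1) / (j+1)!, gives
   by induction on m that sum_t \bar q^{m,Q}(t) (T - t)^j / j! equals
   T^(m+j) / (m+j)! for m + j <= 2Q.  All suprema in ||1||_{k,Q} equal 1, so
   the semi-norm is the case j = 0 of this identity. *)

Section PolyDerivDvdp.
Variable R : fieldType.
Implicit Types p q : {poly R}.

Lemma dvdp_deriv_exp p q m : p ^+ m.+1 %| q -> p ^+ m %| q^`().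
Proof.
rewrite dvdp_eq => /eqP ->; rewrite derivM deriv_exp /= dvdp_add //.
  by rewrite exprS mulrA dvdp_mull.
by rewrite -mulrnAl mulrA dvdp_mull.
Qed.

Lemma dvdp_derivn_exp p q n i : p ^+ n %| q -> p ^+ (n - i) %| q^`(i).
Proof.
move=> pq; elim: i => [|i IH]; first by rewrite subn0 derivn0.
rewrite derivnS; case: (ltnP i n) => [lt_in|le_ni].
  by apply: dvdp_deriv_exp; rewrite -subSn.
by move/leqW: le_ni; rewrite -subn_eq0 => /eqP ->; rewrite dvd1p.
Qed.

End PolyDerivDvdp.

Section DerivnComp.
Variable R : comNzRingType.

Lemma derivn_comp_lin (p q : {poly R}) (c : R) n : q^`() = c%:P ->
  (p \Po q)^`(n) = c ^+ n *: (p^`(n) \Po q).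
Proof.
move=> q'c; elim: n => [|n IH]; first by rewrite !derivn0 expr0 scale1r.
rewrite derivnS IH derivZ deriv_comp q'c -derivnS mulrC mul_polyC scalerA.
by rewrite exprSr mulrC.
Qed.

End DerivnComp.

Section PolyIntegral.
Variable R : realFieldType.
Implicit Types (a b : R) (p q : {poly R}).

Definition antideriv p : {poly R} :=
  \poly_(i < (size p).+1) (if i is j.+1 then p`_j / j.+1%:R else 0).

Lemma antiderivK p : (antideriv p)^`() = p.
Proof.
apply/polyP => i; rewrite coef_deriv coef_poly.
case: ltnP => hi.
  by rewrite /= -[_ *+ _]mulr_natr divfK // pnatr_eq0.
by rewrite mul0rn nth_default // -ltnS.
Qed.

Lemma deriv_eq0_polyC p : p^`() = 0 -> p = (p`_0)%:P.
Proof.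
move=> p'0; apply: size1_polyC.
by have := size_deriv p; rewrite p'0 size_poly0 => /esym/eqP; rewrite -subn1 subn_eq0.
Qed.

Definition poly_integral a b p : R := (antideriv p).[b] - (antideriv p).[a].

Lemma poly_integralE a b p P : P^`() = p -> poly_integral a b p = P.[b] - P.[a].
Proof.
move=> P'p; have /deriv_eq0_polyC PE : (P - antideriv p)^`() = 0.
  by rewrite derivB antiderivK P'p subrr.
rewrite /poly_integral -[P](subrK (antideriv p)) PE !hornerE; lra.
Qed.

Lemma poly_integral0 a b : poly_integral a b 0 = 0.
Proof. by rewrite (@poly_integralE _ _ _ 0) ?deriv0 // !horner0 subrr. Qed.

Lemma poly_integralD a b p q :
  poly_integral a b (p + q) = poly_integral a b p + poly_integral a b q.
Proof.
rewrite (@poly_integralE _ _ _ (antideriv p + antideriv q)).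
  by rewrite /poly_integral !hornerD; lra.
by rewrite derivD !antiderivK.
Qed.

Lemma poly_integralZ a b c p : poly_integral a b (c *: p) = c * poly_integral a b p.
Proof.
rewrite (@poly_integralE _ _ _ (c *: antideriv p)); last by rewrite derivZ antiderivK.
by rewrite /poly_integral !hornerZ mulrBr.
Qed.

Lemma poly_integral_sum a b (I : Type) (r : seq I) (F : I -> {poly R}) :
  poly_integral a b (\sum_(i <- r) F i) = \sum_(i <- r) poly_integral a b (F i).
Proof. exact: (big_morph _ (poly_integralD a b) (poly_integral0 a b)). Qed.

Lemma poly_integral_byparts a b p q :
  poly_integral a b (p^`() * q) =
  (p * q).[b] - (p * q).[a] - poly_integral a b (p * q^`()).
Proof.
have := @poly_integralE a b _ (p * q) (derivM p q).
rewrite poly_integralD; lra.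
Qed.

End PolyIntegral.

Section Rodrigues.
Variable R : realFieldType.
Implicit Types (a b : R) (p q : {poly R}).

Definition rodrigues a b n : {poly R} := (('X - a%:P) * ('X - b%:P)) ^+ n.

(* Up to a nonzero factor, [legendre n] transported from [-1, 1] to [a, b]
   (see [legendre_comp_resc_poly]). *)
Definition shifted_legendre a b n : {poly R} := (rodrigues a b n)^`(n).

Lemma rodriguesC a b n : rodrigues a b n = rodrigues b a n.
Proof. by rewrite /rodrigues mulrC. Qed.

Lemma root_rodrigues_derivn a b n i : (i < n)%N ->
  root (rodrigues a b n)^`(i) a && root (rodrigues a b n)^`(i) b.
Proof.
move=> lt_in.
have rootl a' b' : root (rodrigues a' b' n)^`(i) a'.
  rewrite -dvdp_XsubCl; apply: (@dvdp_trans _ (('X - a'%:P) ^+ (n - i))).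
    by rewrite -(subnSK lt_in) exprS dvdp_mulIl.
  by apply: dvdp_derivn_exp; rewrite /rodrigues exprMn dvdp_mulr.
by rewrite rootl rodriguesC rootl.
Qed.

Lemma poly_integral_rodrigues_derivn_mul a b n j q : (j <= n)%N ->
  (size q <= j)%N -> poly_integral a b ((rodrigues a b n)^`(j) * q) = 0.
Proof.
elim: j q => [|j IH] q le_jn.
  by rewrite leqn0 size_poly_eq0 => /eqP ->; rewrite mulr0 poly_integral0.
move=> sq; rewrite derivnS poly_integral_byparts IH ?(ltnW le_jn) //; last first.
  by rewrite size_deriv -subn1 leq_subLR add1n.
have /andP[/rootP ra /rootP rb] := root_rodrigues_derivn a b le_jn.
by rewrite !hornerM ra rb !mul0r subrr subr0.
Qed.

Lemma size_rodrigues a b n : size (rodrigues a b n) = (n + n).+1.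
Proof.
rewrite /rodrigues exprMn size_mul ?expf_neq0 ?polyXsubC_eq0 //.
by rewrite !size_exp_XsubC addSn addnS.
Qed.

Lemma size_shifted_legendre a b n : size (shifted_legendre a b n) = n.+1.
Proof. by rewrite size_derivn size_rodrigues subSn ?leq_addl // addnK. Qed.

Lemma shifted_legendre_neq0 a b n : shifted_legendre a b n != 0.
Proof. by rewrite -size_poly_gt0 size_shifted_legendre. Qed.

End Rodrigues.

Section Lagrange.
Variable R : fieldType.
Implicit Types (s : seq R) (t : R) (p : {poly R}).

(* Unlike [lagrange] of qpoly, indexed by a duplicate-free sequence of nodes,
   with the factors normalised as in [gl_weight]. *)
Definition lagrange_basis s t : {poly R} :=
  \prod_(u <- s | u != t) ((t - u)^-1 *: ('X - u%:P)).

Lemma lagrange_basis_sample s t u : uniq s -> u \in s ->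
  (lagrange_basis s t).[u] = (u == t)%:R.
Proof.
move=> us su; rewrite /lagrange_basis horner_prod.
have [->|ne] := eqVneq u t.
  by rewrite big1 // => v vt; rewrite hornerZ hornerXsubC mulVf // subr_eq0 eq_sym.
rewrite -big_filter (bigD1_seq u) ?filter_uniq ?mem_filter ?ne //=.
by rewrite hornerZ hornerXsubC subrr mulr0 mul0r.
Qed.

Lemma size_lagrange_basis s t : t \in s -> (size (lagrange_basis s t) <= size s)%N.
Proof.
move=> st; rewrite /lagrange_basis scaler_prod.
apply: leq_trans (size_scale_leq _ _) _.
rewrite -big_filter size_prod_XsubC size_filter.
by rewrite -(count_predC (pred1 t)) addnC -addn1 leq_add2l -has_count has_pred1.
Qed.

Lemma lagrange_interp s p : uniq s -> (size p <= size s)%N ->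
  p = \sum_(t <- s) p.[t] *: lagrange_basis s t.
Proof.
move=> us sp; apply/eqP; rewrite -subr_eq0; apply/eqP.
set d := _ - _.
have sd : (size d <= size s)%N.
  apply: leq_trans (size_polyD _ _) _; rewrite geq_max sp size_polyN /=.
  rewrite big_seq; apply: (big_ind (fun q : {poly R} => size q <= size s)%N).
  - by rewrite size_poly0.
  - by move=> q r hq hr; apply: leq_trans (size_polyD _ _) _; rewrite geq_max hq hr.
  - by move=> t st; apply: leq_trans (size_scale_leq _ _) (size_lagrange_basis st).
have rd : all (root d) s.
  apply/allP => u su; rewrite /root /d hornerD hornerN horner_sum.
  rewrite (bigD1_seq u) //= hornerZ lagrange_basis_sample // eqxx mulr1.
  rewrite big1 ?addr0 ?subrr // => t /negbTE tu.
  by rewrite hornerZ lagrange_basis_sample // eq_sym tu mulr0.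
apply: contraTeq (leqnn (size s)) => /max_poly_roots/(_ rd us) lt_sd.
by rewrite -ltnNge (leq_trans lt_sd sd).
Qed.

End Lagrange.

Section GaussQuadrature.
Variable R : realFieldType.

Lemma gauss_quadrature (a b : R) (G : {poly R}) (s : seq R) :
    uniq s -> size G = (size s).+1 -> all (root G) s ->
    (forall q : {poly R}, (size q <= size s)%N -> poly_integral a b (G * q) = 0) ->
  forall p : {poly R}, (size p <= size s + size s)%N ->
  poly_integral a b p = \sum_(t <- s) p.[t] * poly_integral a b (lagrange_basis s t).
Proof.
move=> us sG rG orthG p sp.
have G0 : G != 0 by rewrite -size_poly_gt0 sG.
have pE t : t \in s -> p.[t] = (p %% G).[t].
  by move=> st; rewrite {1}(divp_eq p G) !hornerE (rootP (allP rG t st)) mulr0 add0r.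
rewrite {1}(divp_eq p G) poly_integralD mulrC orthG ?add0r; last first.
  by rewrite size_divp // sG /= leq_subLR.
have sr : (size (p %% G)%R <= size s)%N by rewrite -ltnS -sG ltn_modp.
rewrite {1}(lagrange_interp us sr) poly_integral_sum; apply: eq_big_seq => t st.
by rewrite poly_integralZ pE.
Qed.

End GaussQuadrature.

Section LegendreNodes.
Variable R : rcfType.

Lemma poly_rolle_seq (p : {poly R}) (x : R) (l : seq R) :
  path <%R x l -> all (root p) (x :: l) ->
  exists2 s : seq R, size s = size l &
    [/\ sorted <%R s, all (fun c => x < c < last x l) s & all (root p^`()) s].
Proof.
elim: l x => [|y l IH] x /=; first by exists [::].
move=> /andP[xy pyl] /and3P[/rootP rx ry rl].
have [c /[!in_itv] /= /andP[xc cy] /rootP p'c] :=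
  poly_rolle xy (etrans rx (esym (rootP ry))).
have [s' ss' [srt' bnd' rt']] := IH y pyl ltac:(by rewrite /= ry rl).
have ylast := unstable.path_lt_le_last pyl.
exists (c :: s'); first by rewrite /= ss'.
split => /=; last by rewrite p'c.
- rewrite lt_path_sortedE srt' andbT; apply/allP => z /(allP bnd') /andP[yz _].
  exact: lt_trans cy yz.
- rewrite xc (lt_le_trans cy ylast) /=; apply/allP => z /(allP bnd') /andP[yz ->].
  by rewrite (lt_trans xy yz).
Qed.

Lemma rodrigues_derivn_roots (a b : R) n j : a < b -> (j <= n)%N ->
  exists2 s : seq R, size s = j &
    [/\ sorted <%R s, all (fun c => a < c < b) s & all (root (rodrigues a b n)^`(j)) s].
Proof.
move=> ab; elim: j => [|j IH] le_jn; first by exists [::].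
have [s ss [srt bnd rts]] := IH (ltnW le_jn).
have /andP[ra rb] := root_rodrigues_derivn a b le_jn.
have abs : path <%R a (rcons s b).
  rewrite rcons_path lt_path_sortedE srt andbT; apply/andP; split.
    by apply/allP => z /(allP bnd) /andP[].
  have := mem_last a s; rewrite inE => /orP[/eqP ->//|/(allP bnd) /andP[]//].
have rts_ab : all (root (rodrigues a b n)^`(j)) (a :: rcons s b).
  by rewrite /= ra all_rcons rb rts.
have [s' ss' [srt' bnd' rts']] := poly_rolle_seq abs rts_ab.
exists s'; first by rewrite ss' size_rcons ss.
by split=> //; rewrite last_rcons in bnd'; rewrite -derivnS in rts'.
Qed.

Definition gl_nodes n (a b : R) : seq R := roots (shifted_legendre a b n) a b.

Lemma gl_nodes_in n (a b : R) t : t \in gl_nodes n a b -> a < t < b.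
Proof. by move/roots_in; rewrite in_itv. Qed.

Lemma gl_nodes_uniq n (a b : R) : uniq (gl_nodes n a b).
Proof. exact: uniq_roots. Qed.

Lemma gl_nodesP n (a b : R) : a < b ->
  size (gl_nodes n a b) = n /\ root (shifted_legendre a b n) =i gl_nodes n a b.
Proof.
move=> ab; have G0 := shifted_legendre_neq0 a b n.
have rootsG : all (root (shifted_legendre a b n)) (gl_nodes n a b).
  by apply/allP => x /root_roots.
have sN : (size (gl_nodes n a b) < n.+1)%N.
  by rewrite -(size_shifted_legendre a b n) max_poly_roots ?gl_nodes_uniq.
have [s ss [srt bnd rts]] := rodrigues_derivn_roots ab (leqnn n).
have sN' : (n <= size (gl_nodes n a b))%N.
  rewrite -[X in (X <= _)%N]ss uniq_leq_size //.
    by move: srt; rewrite lt_sorted_uniq_le => /andP[].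
  move=> x xs; have /andP[ax xb] := allP bnd x xs.
  by apply: root_in_roots; rewrite ?in_itv /= ?ax ?xb ?(allP rts).
have sNn : size (gl_nodes n a b) = n by apply/eqP; rewrite eqn_leq -ltnS sN.
split=> // x; apply/idP/idP => [rx|/root_roots //].
apply: contraT => xN.
have xrs : all (root (shifted_legendre a b n)) (x :: gl_nodes n a b).
  by rewrite /= rootsG andbT.
have uxs : uniq (x :: gl_nodes n a b) by rewrite /= xN gl_nodes_uniq.
by have := max_poly_roots G0 xrs uxs; rewrite /= sNn size_shifted_legendre ltnn.
Qed.

End LegendreNodes.

Section GaussLegendre.
Variable R : realType.
Implicit Types (a b t : R) (n : nat) (p : {poly R}).

Definition resc_poly a b : {poly R} := ((b - a)^-1)%:P * ('X *+ 2 - (a + b)%:P).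

Lemma horner_resc_poly a b t : (resc_poly a b).[t] = resc a b t.
Proof. by rewrite /resc !hornerE mulrC mulr_natl. Qed.

Lemma resc_bij a b : a != b -> bijective (resc a b).
Proof.
move=> ab; have ba0 : b - a != 0 by rewrite subr_eq0 eq_sym.
by exists (fun c => ((b - a) * c + (a + b)) / 2) => x; rewrite /resc; field.
Qed.

Lemma comp_resc_poly_sqr1 a b : a < b ->
  ('X ^+ 2 - 1) \Po resc_poly a b = (4 / (b - a) ^+ 2) *: (('X - a%:P) * ('X - b%:P)).
Proof.
move=> ab; set e := (b - a)^-1.
have ba1 : (1 : {poly R}) = (e%:P * (b%:P - a%:P)) ^+ 2.
  by rewrite -polyCB -polyCM mulVf ?expr1n // subr_eq0 gt_eqF.
rewrite comp_polyB comp_Xn_poly rmorph1 /resc_poly {1}ba1.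
rewrite -mul_polyC -exprVn polyCM rmorphXn -/e.
have -> : (4 : R)%:P = 4 :> {poly R} by rewrite rmorph_nat.
ring.
Qed.

Lemma legendre_comp_resc_poly a b n : a < b ->
  exists2 c : R, c != 0 & legendre R n \Po resc_poly a b = c *: shifted_legendre a b n.
Proof.
move=> ab; have ba0 : b - a != 0 by rewrite subr_eq0 gt_eqF.
have resc' : (resc_poly a b)^`() = (2 / (b - a))%:P.
  rewrite /resc_poly derivM derivC mul0r add0r derivB derivMn derivX derivC subr0.
  by rewrite polyCM rmorph_nat mulrC.
have := derivn_comp_lin ((('X ^+ 2 - 1) ^+ n : {poly R})) n resc'.
have -> : ('X ^+ 2 - 1) ^+ n \Po resc_poly a b = (('X ^+ 2 - 1) \Po resc_poly a b) ^+ n.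
  exact: rmorphXn.
rewrite comp_resc_poly_sqr1 // exprZn -/(rodrigues a b n) derivnZ.
move=> E; set k := ((2 ^ n * n`!)%:R)^-1 : R.
exists (k * ((2 / (b - a)) ^+ n)^-1 * (4 / (b - a) ^+ 2) ^+ n).
  rewrite !mulf_neq0 ?invr_eq0 ?expf_neq0 ?mulf_neq0 ?invr_eq0 ?expf_neq0 ?pnatr_eq0 //.
  by rewrite muln_eq0 expn_eq0 /= -lt0n fact_gt0.
rewrite /legendre linearZ /= -!scalerA E (scalerA ((2 / (b - a)) ^+ n)^-1).
rewrite mulVf ?scale1r //.
by rewrite expf_neq0 // mulf_neq0 ?invr_eq0 ?pnatr_eq0.
Qed.

Lemma lroots_resc n a b t : a < b ->
  lroots n (resc a b t) <-> root (shifted_legendre a b n) t.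
Proof.
move=> ab; have [c c0 E] := legendre_comp_resc_poly n ab.
rewrite /lroots /= /root -horner_resc_poly -horner_comp E hornerZ mulf_eq0.
by rewrite (negbTE c0).
Qed.

Lemma Rintegral_horner a b p : a < b ->
  Rintegral lebesgue_measure `[a, b] (fun x => p.[x]) = poly_integral a b p.
Proof.
move=> ab; rewrite /Rintegral /poly_integral.
rewrite (@continuous_FTC2 _ _ (horner (antideriv p))) //.
- by apply/continuous_subspaceT => x; exact: continuous_horner.
- split; first by move=> x _; exact: derivable_horner.
    by apply: cvg_at_right_filter; exact: continuous_horner.
  by apply: cvg_at_left_filter; exact: continuous_horner.
- by move=> x _; rewrite -derivE antiderivK.
Qed.

Lemma gl_weight_eq0 n a b t : t \notin gl_nodes n a b -> gl_weight n a b t = 0.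
Proof.
rewrite /gl_weight; case: pselect => // -[ab lr].
by rewrite -(gl_nodesP n ab).2 => /negP[]; apply/lroots_resc.
Qed.

Lemma lroots_setD1_resc n a b t : a < b ->
  [set c | lroots n c /\ c <> resc a b t] =
  resc a b @` [set` [seq u <- gl_nodes n a b | u != t]].
Proof.
move=> ab.
have Nroot : forall x, root (shifted_legendre a b n) x = (x \in gl_nodes n a b).
  exact: (gl_nodesP n ab).2.
have [g rescK gK] := resc_bij (negbT (lt_eqF ab)).
apply/seteqP; split => c /=.
  move=> [lc ct]; exists (g c); last exact: gK.
  have rgc : root (shifted_legendre a b n) (g c) by apply/(lroots_resc _ _ ab); rewrite gK.
  rewrite mem_filter -Nroot rgc andbT.
  by apply: contra_notN ct => /eqP <-; rewrite gK.
move=> [u]; rewrite mem_filter => /andP[ut uN] <-; split.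
  by apply/(lroots_resc n u ab); rewrite Nroot.
by move=> /(can_inj rescK) eut; rewrite eut eqxx in ut.
Qed.

Lemma gl_weightE n a b t : a < b -> t \in gl_nodes n a b ->
  gl_weight n a b t = poly_integral a b (lagrange_basis (gl_nodes n a b) t).
Proof.
move=> ab tN; rewrite /gl_weight; case: pselect => [_|[]]; last first.
  split=> //; apply/(lroots_resc n t ab).
  by move: tN; rewrite -(gl_nodesP n ab).2.
rewrite -Rintegral_horner //; apply: eq_Rintegral => x _.
have [g rescK _] := resc_bij (negbT (lt_eqF ab)).
rewrite lroots_setD1_resc // fsbig_image; last by move=> u v _ _; exact: (can_inj rescK).
rewrite -fsbig_seq ?filter_uniq ?gl_nodes_uniq // big_filter /lagrange_basis horner_prod.
(* after the substitution c = resc a b u, each factor is (x - u) / (t - u) *)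
apply: eq_bigr => u ut; rewrite hornerZ hornerXsubC /resc.
have tu : t - u != 0 by rewrite subr_eq0 eq_sym.
have ba0 : b - a != 0 by rewrite subr_eq0 gt_eqF.
field.
have -> : 2 * t - (2 * u - (a + b)) - (a + b) = 2 * (t - u) by ring.
by rewrite tu ba0 mulf_neq0 // pnatr_eq0.
Qed.

Lemma gauss_legendre_exact n a b (F : seq R) p : a <= b -> uniq F ->
  {subset gl_nodes n a b <= F} -> (size p <= n + n)%N ->
  \sum_(t <- F) gl_weight n a b t * p.[t] = poly_integral a b p.
Proof.
rewrite le_eqVlt => /orP[/eqP <-|ab] uF NF sp.
  rewrite /poly_integral subrr big1 // => t _.
  by rewrite gl_weight_eq0 ?mul0r // /gl_nodes rootsEba.
have [sN Nroot] := gl_nodesP n ab.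
transitivity (\sum_(t <- gl_nodes n a b) gl_weight n a b t * p.[t]).
  rewrite [LHS]fsbig_seq // [RHS]fsbig_seq ?gl_nodes_uniq //.
  apply/esym/fsbig_widen => [x /NF //|x [_ xN]].
  by rewrite /= gl_weight_eq0 ?mul0r //; apply/negP.
have orth (q : {poly R}) : (size q <= size (gl_nodes n a b))%N ->
    poly_integral a b (shifted_legendre a b n * q) = 0.
  by rewrite sN; exact: poly_integral_rodrigues_derivn_mul.
have rootsN : all (root (shifted_legendre a b n)) (gl_nodes n a b).
  by apply/allP => x; rewrite -Nroot.
have sG : size (shifted_legendre a b n) = (size (gl_nodes n a b)).+1.
  by rewrite size_shifted_legendre sN.
rewrite (gauss_quadrature (gl_nodes_uniq n a b) sG rootsN orth) ?sN //.
by apply: eq_big_seq => t tN; rewrite gl_weightE // mulrC.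
Qed.

End GaussLegendre.

Lemma fsbig_seq_cond (R : Type) (idx : R) (op : Monoid.com_law idx)
    (I : choiceType) (A : set I) (r : seq I) (f : I -> R) :
    uniq r -> (forall i, A i -> f i <> idx -> i \in r) ->
  \big[op/idx]_(i \in A) f i = \big[op/idx]_(i <- r | i \in A) f i.
Proof.
move=> ur rA; rewrite (fsbigE [seq i <- r | i \in A]) ?filter_uniq //.
- by rewrite big_filter_cond; apply: eq_bigl => i; rewrite andbb.
- by move=> i /=; rewrite mem_filter => /andP[/set_mem].
- move=> i Ai; rewrite mem_filter => /nandP[/negP[]|/negP iNr]; first exact/mem_set.
  by apply: contra_notP iNr; exact: rA.
Qed.
Arguments fsbig_seq_cond {R idx op I A} r {f}.

Section DividedPowers.
Variables (R : realFieldType) (T : R).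

Definition divpow j : {poly R} := (j`!%:R)^-1 *: (T%:P - 'X) ^+ j.

Lemma divpowE j x : (divpow j).[x] = (T - x) ^+ j / j`!%:R.
Proof. by rewrite /divpow hornerZ !hornerE mulrC. Qed.

Lemma size_divpow j : (size (divpow j) <= j.+1)%N.
Proof.
apply: leq_trans (size_scale_leq _ _) _; apply: leq_trans (size_poly_exp_leq _ _) _.
by rewrite -opprB size_polyN size_XsubC mul1n.
Qed.

Lemma deriv_divpowS j : (divpow j.+1)^`() = - divpow j.
Proof.
rewrite /divpow derivZ (derivCE R).2 derivB derivC derivX sub0r mulN1r /=.
rewrite -[- _ *+ _]scaler_nat scalerA scalerN; congr (- (_ *: _)).
by rewrite factS natrM invfM mulrAC mulVf ?pnatr_eq0 // mul1r.
Qed.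

Lemma poly_integral_divpow s j : poly_integral s T (divpow j) = (divpow j.+1).[s].
Proof.
rewrite (@poly_integralE _ _ _ _ (- divpow j.+1)); last first.
  by rewrite derivN deriv_divpowS opprK.
by rewrite !hornerN !divpowE subrr expr0n /= mul0r oppr0 sub0r opprK.
Qed.

End DividedPowers.

Section IteratedWeights.
Variables (R : realType) (T : R) (Q : nat).
Hypothesis T_ge0 : 0 <= T.

Fixpoint qbar_supp m : seq R :=
  if m is m'.+1 then undup (flatten [seq gl_nodes Q s T | s <- qbar_supp m'])
  else [:: 0].

Lemma qbar_supp_uniq m : uniq (qbar_supp m).
Proof. by case: m => [|m] //=; exact: undup_uniq. Qed.

Lemma qbar_supp_itv m t : t \in qbar_supp m -> 0 <= t <= T.
Proof.
elim: m t => [|m IH] t /=; first by rewrite inE => /eqP ->; rewrite lexx.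
rewrite mem_undup => /flatten_mapP[s /IH /andP[s0 _] /gl_nodes_in /andP[st tT]].
by rewrite (ltW tT) (le_trans s0 (ltW st)).
Qed.

Lemma gl_nodes_qbar_supp m s :
  s \in qbar_supp m -> {subset gl_nodes Q s T <= qbar_supp m.+1}.
Proof. by move=> sm t tN; rewrite /= mem_undup; apply/flatten_mapP; exists s. Qed.

Lemma qbar_eq0 m t : t \notin qbar_supp m -> qbar T Q m t = 0.
Proof.
elim: m t => [|m IH] t /=; first by rewrite inE => /negbTE ->.
move=> tN; apply: fsbig1 => s _.
have [sm|/IH ->] := boolP (s \in qbar_supp m); last by rewrite mul0r.
by rewrite gl_weight_eq0 ?mulr0 //; apply: contra tN; exact: gl_nodes_qbar_supp.
Qed.

Lemma qbarS m t :
  qbar T Q m.+1 t = \sum_(s <- qbar_supp m) qbar T Q m s * gl_weight Q s T t.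
Proof.
have suppP s : [set` `[0, t]] s ->
    qbar T Q m s * gl_weight Q s T t <> 0 -> s \in qbar_supp m.
  by move=> _; apply: contra_notP => /negP/qbar_eq0 ->; rewrite mul0r.
rewrite /= (fsbig_seq_cond _ (qbar_supp_uniq m) suppP).
rewrite big_mkcond /=; apply: eq_big_seq => s sm; case: ifPn => // sNt.
rewrite gl_weight_eq0 ?mulr0 //; apply: contra sNt => /gl_nodes_in /andP[st _].
have /andP[s0 _] := qbar_supp_itv sm.
by apply/mem_set; rewrite /= in_itv /= s0 (ltW st).
Qed.

Lemma qbar_moment m j : (m + j <= Q + Q)%N ->
  \sum_(t <- qbar_supp m) qbar T Q m t * (divpow T j).[t] = (divpow T (m + j)).[0].
Proof.
elim: m j => [|m IH] j mjQ; first by rewrite big_seq1 /= eqxx mul1r.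
under eq_bigr do rewrite qbarS big_distrl.
rewrite exchange_big /= addSnnS -IH ?addnS //; apply: eq_big_seq => s sm.
under eq_bigr do rewrite -mulrA.
rewrite -big_distrr /= -poly_integral_divpow; congr (_ * _).
have /andP[_ sT] := qbar_supp_itv sm.
apply: gauss_legendre_exact => //.
- exact: (qbar_supp_uniq m.+1).
- exact: (gl_nodes_qbar_supp sm).
- by apply: leq_trans (size_divpow _ _) _; lia.
Qed.

Lemma fsum_qbar_itv m :
  (\sum_(t \in [set` `[0, T]%R]) (qbar T Q m t)%:E)%E =
  (\sum_(t <- qbar_supp m) qbar T Q m t)%:E.
Proof.
have suppP t : [set` `[0, T]] t -> (qbar T Q m t)%:E <> 0%E -> t \in qbar_supp m.
  by move=> _; apply: contra_notP => /negP/qbar_eq0 ->.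
rewrite (fsbig_seq_cond _ (qbar_supp_uniq m) suppP) -sumEFin big_seq_cond.
rewrite [RHS]big_seq; apply: eq_bigl => t; apply/andb_idr => /qbar_supp_itv tT.
by apply/mem_set; rewrite /= in_itv.
Qed.

Lemma qbar_mass m : (m <= Q + Q)%N ->
  \sum_(t <- qbar_supp m) qbar T Q m t = T ^+ m / m`!%:R.
Proof.
rewrite -[m in (m <= _)%N]addn0 => /qbar_moment; rewrite addn0 divpowE subr0 => <-.
by apply: eq_bigr => t _; rewrite divpowE expr0 fact0 divr1 mulr1.
Qed.

End IteratedWeights.

Lemma seminorm_cst1 (R : realType) (T : R) (d : nat) (dO : measure_display)
    (Omega : measurableType dO) (P : probability Omega R)
    (W : R -> Omega -> 'rV[R]_d) (k Q : nat) :
  seminorm T P W (fun _ _ => 1) k Q =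
  (\sum_(t \in [set` `[0, T]%R]) (qbar T Q k t)%:E)%E.
Proof.
have sup1 (X : Type) (A : set X) :
    A !=set0 -> ereal_sup [set (1%E : \bar R) | _ in A] = 1%E.
  by move=> /set0P; exact: ereal_sup_cst.
have norm1 : esqrt (\int[P]_w ((1 : R) ^+ 2)%:E) = 1%E.
  by rewrite expr1n integral_cst //= probability_setT mul1e /= sqrtr1.
rewrite /seminorm; apply: eq_fsbigr => t /set_mem; rewrite /= in_itv /= => /andP[t0 tT].
rewrite norm1 sup1; last by exists 0.
rewrite (eq_imagel (f' := fun=> 1%E)) => [|s]; last first.
  rewrite /= in_itv /= => /andP[ts _]; apply: sup1.
  by exists 0; rewrite /= in_itv /= lexx (le_trans t0 ts).
by rewrite sup1 ?mule1 //; exists t; rewrite /= in_itv /= lexx tT.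
Qed.

Theorem lemma3p8 (R : realType) (T : R) (hT : 0 < T) (d : nat)
  (dO : measure_display) (Omega : measurableType dO)
  (P : probability Omega R) (W : R -> Omega -> 'rV[R]_d)
  (Q : nat) (hQ : (0 < Q)%N) (k : nat) (hk : (k <= 2 * Q - 1)%N) :
  seminorm T P W (fun _ _ => 1) k Q = ((T ^+ k) / (k`!)%:R)%:E.
Proof.
have kQ : (k <= Q + Q)%N by lia.
by rewrite seminorm_cst1 (fsum_qbar_itv Q (ltW hT)) (qbar_mass (ltW hT) kQ).
Qed.
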